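(* In the group \(\mathcal{G}\) described below, if \(i,j,k\in\{1,\dots,7\}\) are collinear points of the Fano plane, then \(s_is_js_k=1\).
   Context: Let \(\mathcal{G}=\langle x,y,t \mid x^7, y^2, (xy)^3, [x,y]^4, t^2, [t^{x^2},yx^{-1}], [t,y], (yt^{x^2})^5, (xyx^2t^x)^5, (xt)^8\rangle\), with \(a^g=g^{-1}ag\), \([a,b]=a^{-1}b^{-1}ab\). Let \(\mathcal{N}=\langle x,y\rangle\le\mathcal{G}\); it acts on \(\{1,\dots,14\}\) on the right via \(x\mapsto(1,2,3,4,5,6,7)(8,9,10,11,12,13,14)\), \(y\mapsto(1,12)(2,3)(4,11)(5,8)(6,13)(9,10)\). Put \(t_7=t\) and \(t_i=t^g\) for any \(g\in\mathcal{N}\) mapping \(7\) to \(i\); indices are taken modulo 14, and \(s_i=t_it_{i+7}\). The Fano plane has points \(1,\dots,7\) and lines \(\{7,1,5\},\{1,2,6\},\{2,3,7\},\{3,4,1\},\{4,5,2\},\{5,6,3\},\{6,7,4\}\); ''collinear'' means the three points are distinct and lie on one of these lines. *)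

From mathcomp Require Import all_boot.
Set Implicit Arguments. Unset Strict Implicit. Unset Printing Implicit Defensive.

Record group := Group {
  carrier :> Type;
  gmul : carrier -> carrier -> carrier;
  ginv : carrier -> carrier;
  gone : carrier;
  gmulA : forall a b c, gmul a (gmul b c) = gmul (gmul a b) c;
  gmul1g : forall a, gmul gone a = a;
  gmulVg : forall a, gmul (ginv a) a = gone
}.

Section Ops.
Variable G : group.
Fixpoint gpow (a : G) (n : nat) : G :=
  if n is n'.+1 then gmul a (gpow a n') else gone G.
Definition gconj (a g : G) : G := gmul (gmul (ginv g) a) g.
Definition gcomm (a b : G) : G :=
  gmul (gmul (gmul (ginv a) (ginv b)) a) b.

(* Positive words in the generators x (false) and y (true) of N; since x
   and y have finite order, every element of N is represented by one. *)
Fixpoint evalw (x y : G) (w : seq bool) : G :=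
  match w with
  | [::] => gone G
  | b :: w' => gmul (if b then y else x) (evalw x y w')
  end.
End Ops.

Definition GG_relations (G : group) (x y t : G) : Prop :=
  let m := @gmul G in
  let e := gone G in
  gpow x 7 = e /\ gpow y 2 = e /\ gpow (m x y) 3 = e /\
  gpow (gcomm x y) 4 = e /\ gpow t 2 = e /\
  gcomm (gconj t (m x x)) (m y (ginv x)) = e /\
  gcomm t y = e /\
  gpow (m y (gconj t (m x x))) 5 = e /\
  gpow (m (m (m x y) (m x x)) (gconj t x)) 5 = e /\
  gpow (m x t) 8 = e.

(* Action of N on {1,...,14} (points outside this range are fixed). *)
Definition act_x (p : nat) : nat :=
  if p == 7 then 1 else if p == 14 then 8
  else if (1 <= p <= 13) then p.+1 else p.

Definition act_y (p : nat) : nat :=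
  match p with
  | 1 => 12 | 12 => 1 | 2 => 3 | 3 => 2 | 4 => 11 | 11 => 4
  | 5 => 8 | 8 => 5 | 6 => 13 | 13 => 6 | 9 => 10 | 10 => 9
  | _ => p
  end.

(* Right action: p^(w_1 w_2 ... w_n) = (...(p^w_1)^w_2 ...)^w_n. *)
Fixpoint actw (p : nat) (w : seq bool) : nat :=
  match w with
  | [::] => p
  | b :: w' => actw (if b then act_y p else act_x p) w'
  end.

Definition fano_lines : seq (seq nat) :=
  [:: [:: 7; 1; 5]; [:: 1; 2; 6]; [:: 2; 3; 7]; [:: 3; 4; 1];
      [:: 4; 5; 2]; [:: 5; 6; 3]; [:: 6; 7; 4]].

Definition collinear (i j k : nat) : bool :=
  [&& i != j, j != k, i != k &
   has (fun L => [&& i \in L, j \in L & k \in L]) fano_lines].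

From mathcomp Require Import all_boot.
Set Implicit Arguments. Unset Strict Implicit. Unset Printing Implicit Defensive.

(* Words in x and y are normalised by a rewriting system for N whose rules are
   checked, by reflection, to follow from the relations of N: the completion is
   replayed as a chain of critical pairs.  Writing t_a = t^(c_a) for coset
   representatives c_a of the stabiliser of 7 (which centralises t), one gets
   t_a^g = t_(a^g) for g in N, so every word in the t_a and in N has a normal
   form (t-word)(N-word).  Reflectively checked certificates, sequences of
   insertions of conjugates of known relators, derive [t_7, t_14] = 1 and then
   s_7 s_1 s_5 = 1.  Finally N permutes the blocks {a, a+7} and is transitive
   on the points and on the ordered collinear triples of the Fano plane, so
   conjugating these two relations shows that t_a and t_(a+7) always commute
   and that s_i s_j s_k = 1 on every line. *)

Section GroupFacts.
Variable G : group.
Local Notation "a * b" := (gmul a b).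
Local Notation e := (gone G).

Lemma gmulgV (a : G) : a * ginv a = e.
Proof.
have E : ginv (ginv a) * (ginv a * (a * ginv a)) = a * ginv a.
  by rewrite gmulA gmulVg gmul1g.
by rewrite -E (gmulA (ginv a) a) gmulVg gmul1g gmulVg.
Qed.

Lemma gmulg1 (a : G) : a * e = a.
Proof. by rewrite -(gmulVg a) gmulA gmulgV gmul1g. Qed.

Lemma gmulKg (a b : G) : ginv a * (a * b) = b.
Proof. by rewrite gmulA gmulVg gmul1g. Qed.

Lemma gmulKVg (a b : G) : a * (ginv a * b) = b.
Proof. by rewrite gmulA gmulgV gmul1g. Qed.

Lemma gmulI (a b c : G) : a * b = a * c -> b = c.
Proof. by move=> E; rewrite -(gmulKg a b) E gmulKg. Qed.

Lemma ginv_unique (a b : G) : a * b = e -> ginv a = b.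
Proof. by move=> E; apply: (@gmulI a); rewrite gmulgV E. Qed.

Lemma ginvM (a b : G) : ginv (a * b) = ginv b * ginv a.
Proof. by apply: ginv_unique; rewrite -gmulA (gmulA b) gmulgV gmul1g gmulgV. Qed.

Lemma ginvK (a : G) : ginv (ginv a) = a.
Proof. exact/ginv_unique/gmulVg. Qed.

Lemma ginv1 : ginv e = e.
Proof. by apply: ginv_unique; rewrite gmulg1. Qed.

Lemma gcomm1_commute (a b : G) : gcomm a b = e -> a * b = b * a.
Proof.
rewrite /gcomm => E.
have <- : (b * a) * (((ginv a * ginv b) * a) * b) = a * b.
  by rewrite -!gmulA (gmulA a (ginv a)) gmulgV gmul1g gmulKVg.
by rewrite E gmulg1.
Qed.

Lemma commuteM (a b c : G) :
  a * b = b * a -> a * c = c * a -> a * (b * c) = (b * c) * a.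
Proof. by move=> Eb Ec; rewrite gmulA Eb -gmulA Ec gmulA. Qed.

Lemma gconj1 (a : G) : gconj a e = a.
Proof. by rewrite /gconj ginv1 gmul1g gmulg1. Qed.

Lemma gconjM (a g h : G) : gconj a (g * h) = gconj (gconj a g) h.
Proof. by rewrite /gconj ginvM -!gmulA. Qed.

Lemma gconjMl (a b g : G) : gconj (a * b) g = gconj a g * gconj b g.
Proof. by rewrite /gconj -!gmulA gmulKVg. Qed.

Lemma gconj_e (g : G) : gconj e g = e.
Proof. by rewrite /gconj gmulg1 gmulVg. Qed.

Lemma gconj_id (a g : G) : a * g = g * a -> gconj a g = a.
Proof. by move=> E; rewrite /gconj -gmulA E gmulKg. Qed.

Lemma gconj_invol (a g : G) : a * a = e -> gconj a g * gconj a g = e.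
Proof. by move=> E; rewrite -gconjMl E gconj_e. Qed.

Lemma invol_commute (a b : G) :
  a * a = e -> b * b = e -> (a * b) * (a * b) = e -> a * b = b * a.
Proof.
move=> Ha Hb Hab.
by rewrite -(ginv_unique Hab) ginvM (ginv_unique Ha) (ginv_unique Hb).
Qed.

Lemma commute_gconjV (a q b : G) : gconj a q * b = b * gconj a q ->
  a * (q * b * ginv q) = (q * b * ginv q) * a.
Proof.
rewrite /gconj => E.
have : q * ((ginv q * a * q) * b) * ginv q = q * (b * (ginv q * a * q)) * ginv q.
  by rewrite E.
by rewrite -!gmulA !gmulKVg gmulgV gmulg1.
Qed.

End GroupFacts.

(** * Rewriting in N *)

(* Words in N are sequences of letter codes: 0 stands for x, 1 for x^-1 and
   every other code for y. *)

Fixpoint rewrite_first (l r w : seq nat) : option (seq nat) :=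
  if take (size l) w == l then Some (r ++ drop (size l) w) else
  if w is c :: w' then omap (cons c) (rewrite_first l r w') else None.

Fixpoint rewrite_once (rs : seq (seq nat * seq nat)) (w : seq nat) :
    option (seq nat) :=
  if rs is (l, r) :: rs' then
    if rewrite_first l r w is Some v then Some v else rewrite_once rs' w
  else None.

Fixpoint reduce (n : nat) (rs : seq (seq nat * seq nat)) (w : seq nat) :=
  if n is n'.+1 then
    if rewrite_once rs w is Some v then reduce n' rs v else w
  else w.

Definition reduce_fuel := 400.

Definition N_relators : seq (seq nat) :=
  [:: [:: 0; 1]; [:: 1; 0]; [:: 2; 2]; nseq 7 0; flatten (nseq 3 [:: 0; 2]);
      flatten (nseq 4 [:: 1; 2; 0; 2])].

(* A completion step [(0, i, _, _)] adds the rule (i-th relator -> empty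
   word); a step [(1, i, j, k)] adds the critical pair of rules i and j whose
   left-hand sides overlap in k letters, normalised by the earlier rules. *)
Definition critical_pair (rs : seq (seq nat * seq nat)) (c : nat * nat * nat * nat) :=
  let: (kind, i, j, k) := c in
  if kind == 0 then (nth [::] N_relators i, [::]) else
  let: (l1, r1) := nth ([::], [::]) rs i in
  let: (l2, r2) := nth ([::], [::]) rs j in
  (r1 ++ drop k l2, take (size l1 - k) l1 ++ r2).

Definition overlap_ok (rs : seq (seq nat * seq nat)) (c : nat * nat * nat * nat) :=
  let: (kind, i, j, k) := c in
  let l1 := (nth ([::], [::]) rs i).1 in
  (kind == 0) || (drop (size l1 - k) l1 == take k (nth ([::], [::]) rs j).1).

Definition rule_derived (rs : seq (seq nat * seq nat)) (k : nat)
    (c : nat * nat * nat * nat) (lr : seq nat * seq nat) :=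
  let rk := take k rs in
  let p := critical_pair rk c in
  let u := reduce reduce_fuel rk p.1 in
  let v := reduce reduce_fuel rk p.2 in
  overlap_ok rk c && ((u == lr.1) && (v == lr.2) || (u == lr.2) && (v == lr.1)).

Definition completion_ok (rs : seq (seq nat * seq nat))
    (cs : seq (nat * nat * nat * nat)) :=
  all (fun k => rule_derived rs k (nth (0, 0, 0, 0) cs k) (nth ([::], [::]) rs k))
      (iota 0 (size rs)).

Section RewritingSoundness.
Variable G : group.
Variables x y : G.
Local Notation "a * b" := (gmul a b).
Local Notation e := (gone G).

Definition eval_letter (c : nat) : G :=
  if c == 0 then x else if c == 1 then ginv x else y.

Definition eval_nword (w : seq nat) : G := foldr (fun c r => eval_letter c * r) e w.

Lemma eval_nword_cat u v : eval_nword (u ++ v) = eval_nword u * eval_nword v.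
Proof. by elim: u => [|c u IH] /=; rewrite ?gmul1g // IH gmulA. Qed.

Lemma eval_nword_pow u n :
  eval_nword (flatten (nseq n u)) = gpow (eval_nword u) n.
Proof. by elim: n => //= n IH; rewrite eval_nword_cat IH. Qed.

Definition sound_rules (rs : seq (seq nat * seq nat)) :=
  forall l r, (l, r) \in rs -> eval_nword l = eval_nword r.

Lemma rewrite_first_sound l r w v : eval_nword l = eval_nword r ->
  rewrite_first l r w = Some v -> eval_nword v = eval_nword w.
Proof.
move=> Elr; elim: w v => [|c w IH] v /=.
  case: ifP => // /eqP El [<-].
  by rewrite cats0 -Elr; case: l El {Elr}.
case: ifP => [/eqP El [<-]|_].
  have -> : eval_letter c * eval_nword w = eval_nword (c :: w) by [].
  by rewrite -{2}(cat_take_drop (size l) (c :: w)) !eval_nword_cat El Elr.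
by case E: (rewrite_first l r w) => [u|] //= [<-] /=; rewrite (IH u).
Qed.

Lemma rewrite_once_sound rs w v : sound_rules rs ->
  rewrite_once rs w = Some v -> eval_nword v = eval_nword w.
Proof.
elim: rs => [|[l r] rs IH] //= Hrs.
case E: (rewrite_first l r w) => [u|].
  by move=> [<-]; apply: (rewrite_first_sound _ E); apply: Hrs; exact: mem_head.
by apply: IH => l' r' H; apply: Hrs; rewrite in_cons H orbT.
Qed.

Lemma reduce_sound n rs w : sound_rules rs ->
  eval_nword (reduce n rs w) = eval_nword w.
Proof.
move=> Hrs; elim: n w => [|n IH] w //=.
by case E: (rewrite_once rs w) => [u|] //; rewrite IH (rewrite_once_sound Hrs E).
Qed.

Hypothesis N_relators_trivial : forall u, u \in N_relators -> eval_nword u = e.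

Lemma nth_rule_sound rs i : sound_rules rs ->
  eval_nword (nth ([::], [::]) rs i).1 = eval_nword (nth ([::], [::]) rs i).2.
Proof.
move=> Hrs; case: (ltnP i (size rs)) => Hi; last by rewrite nth_default.
by apply: Hrs; rewrite -surjective_pairing; exact: mem_nth.
Qed.

Lemma critical_pair_sound rs c : sound_rules rs -> overlap_ok rs c ->
  eval_nword (critical_pair rs c).1 = eval_nword (critical_pair rs c).2.
Proof.
move=> Hrs; case: c => [[[kind i] j] k] /=.
case: ifP => _ /= Hov.
  case: (ltnP i (size N_relators)) => Hi; last by rewrite nth_default.
  by apply: N_relators_trivial; apply: mem_nth.
move: Hov (nth_rule_sound i Hrs) (nth_rule_sound j Hrs).
case: (nth _ rs i) => l1 r1; case: (nth _ rs j) => l2 r2 /= /eqP Hov E1 E2.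
rewrite !eval_nword_cat -E1 -E2.
rewrite -{1}(cat_take_drop (size l1 - k) l1) -{2}(cat_take_drop k l2) Hov.
by rewrite !eval_nword_cat gmulA.
Qed.

Lemma completion_sound rs cs : completion_ok rs cs -> sound_rules rs.
Proof.
move=> /allP Hok.
suff key n k : k < n -> k < size rs ->
    eval_nword (nth ([::], [::]) rs k).1 = eval_nword (nth ([::], [::]) rs k).2.
  move=> l r /(nthP ([::], [::])) [i Hi Ei].
  by have := key i.+1 i (ltnSn i) Hi; rewrite Ei.
elim: n k => [|n IH] k // Hkn Hk.
have Hrk : sound_rules (take k rs).
  move=> l r /(nthP ([::], [::])) [i Hi Ei].
  rewrite size_take Hk in Hi; rewrite nth_take // in Ei.
  by have := IH i (leq_trans Hi Hkn) (ltn_trans Hi Hk); rewrite Ei.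
have := Hok k; rewrite mem_iota add0n => /(_ Hk).
rewrite /rule_derived; case: (nth _ rs k) => l r.
case/andP => /(critical_pair_sound Hrk) Ep.
by case/orP => /andP [/eqP <- /eqP <-]; rewrite !reduce_sound.
Qed.

End RewritingSoundness.

(** * Words in N and the conjugates of t *)

Definition act_xinv (p : nat) : nat :=
  if p == 1 then 7 else if p == 8 then 14 else if 2 <= p <= 14 then p.-1 else p.

Definition act_letter (c p : nat) : nat :=
  if c == 0 then act_x p else if c == 1 then act_xinv p else act_y p.

Definition inv_letter (c : nat) : nat := if c == 0 then 1 else if c == 1 then 0 else c.

Definition is_point (p : nat) : bool := 0 < p < 15.

Lemma is_pointE a : is_point a = (a \in iota 1 14).
Proof. by rewrite mem_iota. Qed.

Lemma act_letter_point c p : is_point p -> is_point (act_letter c p).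
Proof. by case/andP; case: c => [|[|c]]; do 15?[case: p => [|p] //]. Qed.

Inductive mletter := Tlet of nat | Nlet of nat.

Definition mletter_ok (l : mletter) : bool :=
  if l is Tlet a then is_point a else true.

Definition mword_ok (w : seq mletter) : bool := all mletter_ok w.

(* Normal forms are pairs (t-part, N-part); an N-letter g is moved right
   across the t-letters using g t_a = t_(a^(g^-1)) g, and t_a t_a cancels. *)
Definition push_letter (l : mletter) (st : seq nat * seq nat) :=
  match l, st.1 with
  | Tlet a, b :: L => if a == b then (L, st.2) else (a :: st.1, st.2)
  | Tlet a, [::] => ([:: a], st.2)
  | Nlet c, _ => (map (act_letter (inv_letter c)) st.1, c :: st.2)
  end.

Definition normalize (w : seq mletter) := foldr push_letter ([::], [::]) w.

Definition normal_form (rs : seq (seq nat * seq nat)) (w : seq mletter) :=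
  let st := normalize w in (st.1, reduce reduce_fuel rs st.2).

Definition of_normal (st : seq nat * seq nat) : seq mletter :=
  map Tlet st.1 ++ map Nlet st.2.

Definition inv_mletter (l : mletter) : mletter :=
  if l is Nlet c then Nlet (inv_letter c) else l.

Definition inv_mword (w : seq mletter) : seq mletter := rev (map inv_mletter w).

(* A certificate shows that a word is trivial by reaching the empty normal
   form through steps that preserve triviality: inserting a conjugate
   u R^(+-1) u^-1 of a known relator R, conjugating, or inverting. *)
Inductive cert_step :=
  | Insert of seq mletter & nat & bool
  | Conj of seq mletter
  | Invert.

Definition apply_step (rs : seq (seq nat * seq nat)) (rels : seq (seq mletter))
    (st : seq nat * seq nat) (c : cert_step) : seq nat * seq nat :=
  match c with
  | Insert u r s =>
      let R := nth [::] rels r in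
      normal_form rs (u ++ (if s then R else inv_mword R) ++ inv_mword u ++ of_normal st)
  | Conj v => normal_form rs (inv_mword v ++ of_normal st ++ v)
  | Invert => normal_form rs (inv_mword (of_normal st))
  end.

Definition step_ok (c : cert_step) : bool :=
  match c with Insert u _ _ | Conj u => mword_ok u | Invert => true end.

Definition cert_ok (rs : seq (seq nat * seq nat)) (rels : seq (seq mletter))
    (w : seq mletter) (cs : seq cert_step) : bool :=
  all step_ok cs && (foldl (apply_step rs rels) (normal_form rs w) cs == ([::], [::])).

Section MixedWords.
Variable G : group.
Variables x y t : G.
Local Notation "a * b" := (gmul a b).
Local Notation e := (gone G).
Local Notation eval_letter := (eval_letter x y).
Local Notation eval_nword := (eval_nword x y).

Variable coset_rep : nat -> seq nat.

Definition tpoint (a : nat) : G := gconj t (eval_nword (coset_rep a)).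

Definition eval_tword (L : seq nat) : G := foldr (fun a r => tpoint a * r) e L.

Definition eval_mletter (l : mletter) : G :=
  match l with Tlet a => tpoint a | Nlet c => eval_letter c end.

Definition eval_mword (w : seq mletter) : G :=
  foldr (fun l r => eval_mletter l * r) e w.

Variable rs : seq (seq nat * seq nat).
Hypothesis rs_sound : sound_rules x y rs.
Hypothesis t_invol : t * t = e.
Hypothesis y_invol : y * y = e.
Hypothesis tpoint_conj_letter : forall c a,
  is_point a -> gconj (tpoint a) (eval_letter c) = tpoint (act_letter c a).

Lemma mword_ok_cat u v : mword_ok (u ++ v) = mword_ok u && mword_ok v.
Proof. exact: all_cat. Qed.

Lemma eval_mword_cat u v : eval_mword (u ++ v) = eval_mword u * eval_mword v.
Proof. by elim: u => [|l u IH] /=; rewrite ?gmul1g // IH gmulA. Qed.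

Lemma eval_mword_pow u n : eval_mword (flatten (nseq n u)) = gpow (eval_mword u) n.
Proof. by elim: n => //= n IH; rewrite eval_mword_cat IH. Qed.

Lemma tpoint_invol a : tpoint a * tpoint a = e.
Proof. exact: gconj_invol. Qed.

Lemma eval_inv_letter c : eval_letter (inv_letter c) = ginv (eval_letter c).
Proof.
case: c => [|[|c]]; rewrite /eval_letter /inv_letter /= ?ginvK //.
by apply/esym/ginv_unique.
Qed.

Lemma eval_letter_tpoint c a : is_point a ->
  eval_letter c * tpoint a = tpoint (act_letter (inv_letter c) a) * eval_letter c.
Proof.
move=> Ha; rewrite -tpoint_conj_letter // eval_inv_letter /gconj ginvK.
by rewrite -gmulA gmulVg gmulg1.
Qed.

Lemma eval_letter_tword c L : all is_point L ->
  eval_letter c * eval_tword L =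
  eval_tword (map (act_letter (inv_letter c)) L) * eval_letter c.
Proof.
elim: L => [|a L IH] /=; first by rewrite gmulg1 gmul1g.
by case/andP => Ha HL; rewrite gmulA eval_letter_tpoint // -!gmulA IH.
Qed.

Lemma normalize_sound w : mword_ok w ->
  eval_mword w = eval_tword (normalize w).1 * eval_nword (normalize w).2 /\
  all is_point (normalize w).1.
Proof.
elim: w => [|l w IH] /=; first by rewrite gmulg1.
case/andP => Hl /IH [-> HL].
case: l Hl => [a|c] /= Hl.
  case: (normalize w) HL => [[|b L] n] /= HL; first by rewrite Hl gmul1g gmulg1.
  case: ifP => [/eqP <-|_] /=; last by rewrite Hl HL !gmulA.
  by rewrite gmulA (gmulA (tpoint a)) tpoint_invol gmul1g; case/andP: HL.
split; first by rewrite gmulA eval_letter_tword // gmulA.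
by rewrite all_map; apply: sub_all HL => a; apply: act_letter_point.
Qed.

Lemma eval_of_normal st :
  eval_mword (of_normal st) = eval_tword st.1 * eval_nword st.2.
Proof.
rewrite eval_mword_cat; congr (_ * _).
  by elim: st.1 => //= a L ->.
by elim: st.2 => //= c w ->.
Qed.

Lemma normal_form_sound w : mword_ok w ->
  eval_mword (of_normal (normal_form rs w)) = eval_mword w /\
  mword_ok (of_normal (normal_form rs w)).
Proof.
move=> Hw; have [E HL] := normalize_sound Hw.
rewrite eval_of_normal reduce_sound // E; split => //.
by rewrite mword_ok_cat /mword_ok !all_map HL; apply/allP.
Qed.

Lemma eval_inv_mword w : eval_mword (inv_mword w) = ginv (eval_mword w).
Proof.
elim: w => [|l w IH]; first by rewrite /= ginv1.
rewrite /inv_mword map_cons rev_cons -cats1 eval_mword_cat -/(inv_mword w) IH.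
rewrite /= gmulg1 ginvM; congr (_ * _); case: l => [a|c] /=.
  exact/esym/ginv_unique/tpoint_invol.
exact: eval_inv_letter.
Qed.

Lemma inv_mword_ok w : mword_ok w -> mword_ok (inv_mword w).
Proof. by rewrite /mword_ok /inv_mword all_rev all_map; apply: sub_all; case. Qed.

Variable rels : seq (seq mletter).
Hypothesis rels_trivial : forall r,
  mword_ok (nth [::] rels r) /\ eval_mword (nth [::] rels r) = e.

Lemma apply_step_sound st c : mword_ok (of_normal st) -> step_ok c ->
  mword_ok (of_normal (apply_step rs rels st c)) /\
  (eval_mword (of_normal (apply_step rs rels st c)) = e ->
   eval_mword (of_normal st) = e).
Proof.
case: c => [u r s|v|] Hst Hu /=.
- have {}Hu : mword_ok u := Hu.
  have [Rok Re] := rels_trivial r; set R := nth [::] rels r in Rok Re *.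
  have [RSok RSe] : mword_ok (if s then R else inv_mword R) /\
                    eval_mword (if s then R else inv_mword R) = e.
    by case: s; rewrite ?eval_inv_mword ?Re ?ginv1 ?inv_mword_ok.
  have Hok : mword_ok (u ++ (if s then R else inv_mword R) ++ inv_mword u ++ of_normal st).
    by rewrite mword_ok_cat Hu mword_ok_cat RSok mword_ok_cat (inv_mword_ok Hu).
  have [-> ->] := normal_form_sound Hok.
  by split=> //; rewrite !eval_mword_cat RSe gmul1g eval_inv_mword gmulKVg.
- have Hok : mword_ok (inv_mword v ++ of_normal st ++ v).
    by rewrite mword_ok_cat (inv_mword_ok Hu) mword_ok_cat Hst.
  have [-> ->] := normal_form_sound Hok.
  split=> //; rewrite eval_mword_cat eval_mword_cat eval_inv_mword.
  move: (eval_mword v) (eval_mword (of_normal st)) => V S E.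
  have : ginv V * (S * V) * ginv V = ginv V by rewrite E gmul1g.
  rewrite -!gmulA gmulgV gmulg1 => E'.
  by apply: (@gmulI _ (ginv V)); rewrite E' gmulg1.
- have [-> ->] := normal_form_sound (inv_mword_ok Hst).
  by split=> //; rewrite eval_inv_mword => E; rewrite -[LHS]ginvK E ginv1.
Qed.

Lemma cert_sound w cs : mword_ok w -> cert_ok rs rels w cs -> eval_mword w = e.
Proof.
move=> Hw /andP [Hcs /eqP Hfin].
have [E0 O0] := normal_form_sound Hw.
rewrite -E0; move: (normal_form rs w) O0 Hcs Hfin => st Ost Hcs.
elim: cs st Ost Hcs => [|c cs IH] st Ost /= => [_ -> //|/andP [Hc Hcs] Hfin].
have [O1 E1] := apply_step_sound Ost Hc.
exact/E1/(IH _ O1 Hcs Hfin).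
Qed.

End MixedWords.

Definition N_rules : seq (seq nat * seq nat) := [::
  ([::0;1], [::]);
  ([::1;0], [::]);
  ([::2;2], [::]);
  ([::0;0;0;0;0;0;0], [::]);
  ([::0;2;0;2;0;2], [::]);
  ([::1;2;0;2;1;2;0;2;1;2;0;2;1;2;0;2], [::]);
  ([::2;0;2;1;2;0;2;1;2;0;2;1;2;0;2], [::0]);
  ([::0;0;0;0;0;0], [::1]);
  ([::2;0;2;0;2], [::1]);
  ([::0;2;0;2;0], [::2]);
  ([::1;2;0;2;1;2;0;2;1;2;0;2;1;2;0], [::2]);
  ([::1;2;0;2;1;2;0;2;1;2;0;2;1;2], [::0;2;0;2]);
  ([::2;0;2;1;2;0;2;1;2;0;2;1;2], [::0;0;2;0;2]);
  ([::0;0;0;0;0], [::1;1]);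
  ([::2;0;2;0], [::1;2]);
  ([::0;2;1;2;0;2;1;2;0;2;1;2;0;2], [::2;0]);
  ([::0;2;0;2], [::2;1]);
  ([::2;0;2;1;2;0;2;1;2;0;2;1;1], [::0;0;2]);
  ([::2;0;2;1;2;0;2;1;2;0;2;1], [::0;0;2;0]);
  ([::2;1;2;0;2;1;2;0;2;1;2;0;2], [::1;2;0]);
  ([::1;1;2;0;2;1;2;0;2;1;2;0;2], [::2;0;0]);
  ([::1;2;0;2;1;2;0;2;1;2;0;2], [::0;2;0;0]);
  ([::2;0;2;1;2;0;2;1;2;0;2], [::0;0;2;0;0]);
  ([::0;0;0;0], [::1;1;1]);
  ([::2;0;2], [::1;2;1]);
  ([::2;1;2], [::0;2;0]);
  ([::0;2;1;1;2;1;1;1;2;1;1], [::2;0;0;2;0]);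
  ([::1;1;1;2;1;1;1;2;1;1], [::2;0;0;0;2;0]);
  ([::1;1;2;1;1;1;2;1;1], [::0;2;0;0;0;2;0]);
  ([::1;2;1;1;1;2;1;1], [::0;0;2;0;0;0;2;0]);
  ([::1;1;1;1], [::0;0;0]);
  ([::2;0;0;2;0], [::1;2;1;1;2]);
  ([::2;1;1;2;1], [::0;2;0;0;2]);
  ([::1;1;2;1;1;1;2;1], [::0;2;0;0;0;2;0;0]);
  ([::2;1;1;2;0;0;2;1;1], [::1;1;2;0;0;2;1;1;2]);
  ([::0;0;0;2;0;0;0;2;0], [::2;1;1;1;2;1;1]);
  ([::0;0;2;0;0;0;2;0;0], [::1;2;1;1;1;2;1]);
  ([::1;2;1;1;1;2;0;0;2;1;1], [::0;2;0;0;0;2;1;1;2]);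
  ([::2;1;1;1;2;0;0;2;1;1;2], [::0;0;2;0;0;0;2;1;1]);
  ([::0;0;2;0;0;0;2;1;1], [::1;2;1;1;1;2;0;0]);
  ([::1;2;1;1;1;2;0;0;0], [::0;0;2;0;0;0;2;1]);
  ([::1;2;1;1;2;0;0;2], [::0;0;2;0;0;2;1;1]);
  ([::1;2;0;0;2;1;1;2;0], [::0;2;1;1;2;0;0;2;1]);
  ([::0;0;0;2;1;1;1;2;1;1], [::1;2;0;0;0;2;0]);
  ([::1;1;2;0;0;0;2;0;0], [::0;0;2;1;1;1;2;1]);
  ([::0;0;0;2;1;1;1;2;1], [::1;2;0;0;0;2;0;0]);
  ([::1;2;1;1;2;0;0;0], [::2;0;0;2;1;1;1]);
  ([::0;2;0;0;0;2;0;0;2;1], [::1;1;2;1;1;2]);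
  ([::0;2;0;0;2;1;1;1], [::2;1;1;2;0;0;0]);
  ([::2;0;0;0;2;1;1;2;0], [::0;2;1;1;1;2;0;0;2]);
  ([::0;2;0;0;0;2;0;0;2], [::1;1;2;1;1;2;0]);
  ([::2;0;0;0;2;0;0;2;1;1;2], [::1;1;2;0;0]);
  ([::0;2;0;0;0;2;0;0;0], [::1;1;2;1;1;1;2]);
  ([::2;1;1;1;2;1;1;2;0], [::0;0;0;2;0;0;2]);
  ([::1;1;2;0;0;2;1;1;1], [::2;0;0;2;1;1;2;0]);
  ([::2;1;1;1;2;0;0;2;1;1], [::1;2;1;1;1;2;0;0;2]);
  ([::0;0;0;2;0;0;0;2;1], [::2;1;1;1;2;0;0;0]);
  ([::0;0;0;2;0;0;2;1;1], [::2;1;1;2;0;0;2]);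
  ([::0;0;2;1;1;2;0;0;2;1], [::2;0;0;2;1;1;2;0]);
  ([::0;2;0;0;2;1;1;2;0], [::1;2;0;0;2;1;1;1]);
  ([::1;1;2;1;1;1;2;0;0], [::0;2;0;0;0;2;1;1]);
  ([::2;0;0;0;2;0;0;2], [::1;1;1;2;1;1;2;0]);
  ([::2;0;0;0;2;0;0;0], [::1;1;1;2;1;1;1;2]);
  ([::0;0;2;1;1;1;2;1;1], [::1;1;2;0;0;0;2;0]);
  ([::1;1;1;2;0;0;0;2;0], [::0;2;1;1;1;2;1;1]);
  ([::1;1;2;0;0;0;2;1;1], [::0;0;2;1;1;1;2;0;0]);
  ([::0;0;0;2;1;1;2;0;0;0], [::0;2;1;1;2;0;0;2;1]);
  ([::2;0;0;2;1;1;1;2;0;0;2], [::0;2;1;1;2;0;0;2;1]);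
  ([::1;1;2;1;1;2;0;0], [::0;2;0;0;2;1;1;2]);
  ([::1;2;1;1;1;2;0;0;2;1], [::0;0;2;1;1;1;2;0;0;2]);
  ([::2;1;1;1;2;1;1;2], [::0;0;0;2;0;0;2;1]);
  ([::0;0;0;2;1;1;1;2;0;0;0], [::1;2;0;0;0;2;1]);
  ([::0;0;0;2;1;1;2;0;0;2], [::1;2;0;0;2;1;1]);
  ([::0;0;2;1;1;2;0;0;0], [::2;1;1;2;0;0;2;1]);
  ([::1;1;1;2;0;0;2;1;1;2], [::0;2;1;1;2;0;0]);
  ([::2;0;0;0;2;1;1;1;2;0;0], [::0;2;1;1;1;2;1;1]);
  ([::2;1;1;1;2;0;0;2;1], [::1;2;0;0;0;2;1;1;2]);
  ([::2;1;1;1;2;1;1;1], [::0;0;0;2;0;0;0;2]);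
  ([::0;0;2;0;0;2;1;1;2], [::1;2;1;1;2;0;0]);
  ([::2;0;0;2;1;1;2;0;0], [::0;0;2;1;1;2;0;0;2]);
  ([::0;0;2;1;1;1;2;0;0;0;2], [::0;2;0;0;0;2;1;1;1]);
  ([::2;0;0;2;1;1;1;2;0], [::0;2;1;1;2;0;0;0;2]);
  ([::2;1;1;2;0;0;0;2;1], [::1;2;0;0;2;1;1;1;2]);
  ([::0;0;0;2;1;1;1;2;0;0], [::1;2;0;0;0;2;1;1]);
  ([::1;2;0;0;0;2;1;1;1;2;0], [::0;0;0;2;0;0;0;2]);
  ([::0;0;2;1;1;1;2;0;0;0], [::1;1;2;0;0;0;2;1]);
  ([::0;2;0;0;0;2;1;1;1;2], [::1;1;2;0;0;0;2;1]);
  ([::1;2;0;0;2;1;1;1;2;1], [::0;2;1;1;2;0;0;0;2;0]);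
  ([::1;1;2;0;0;2;1;1;2], [::0;0;2;1;1;2;0;0]);
  ([::2;0;0;0;2;1;1;1;2], [::0;2;1;1;1;2;0;0;0]);
  ([::0;2;1;1;1;2;0;0;0;2;1], [::1;1;1;2;1;1;1;2]);
  ([::0;2;0;0;0;2;1;1;1], [::1;1;2;1;1;1;2;0]);
  ([::0;0;2;1;1;2;0;0;2], [::1;1;2;0;0;2;1;1]);
  ([::0;0;0;2;1;1;2;0;0], [::1;2;0;0;2;1;1;2]);
  ([::1;1;1;2;0;0;0;2;1], [::0;2;1;1;1;2;0;0;0]);
  ([::1;1;1;2;1;1;1;2;0], [::2;0;0;0;2;1;1;1]);
  ([::1;1;1;2;0;0;2;1;1], [::0;2;1;1;2;0;0;2]);
  ([::2;1;1;1;2;0;0;0;2], [::1;2;0;0;0;2;1;1;1]);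
  ([::1;2;0;0;0;2;1;1;1], [::0;0;0;2;1;1;1;2;0])].

Definition N_completion : seq (nat * nat * nat * nat) := [::
  (0,0,0,0); (0,1,0,0); (0,2,0,0); (0,3,0,0); (0,4,0,0); (0,5,0,0); (1,0,5,1); (1,1,3,1);
  (1,1,4,1); (1,4,2,1); (1,5,2,1); (1,5,4,2); (1,0,11,1); (1,1,7,1); (1,1,9,1); (1,2,6,1);
  (1,2,8,1); (1,6,8,3); (1,6,9,2); (1,8,6,1); (1,8,6,3); (1,9,6,2); (1,0,21,1); (1,1,13,1);
  (1,1,16,1); (1,2,14,1); (1,2,18,1); (1,14,18,2); (1,16,18,1); (1,0,28,1); (1,1,23,1); (1,24,25,1);
  (1,25,24,1); (1,28,1,1); (1,28,28,2); (1,0,29,1); (1,0,33,1); (1,24,34,1); (1,25,34,1); (1,29,30,1);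
  (1,29,30,2); (1,29,32,3); (1,29,33,2); (1,30,29,1); (1,30,33,1); (1,30,33,2); (1,31,23,1); (1,32,29,3);
  (1,32,30,1); (1,32,33,1); (1,32,33,4); (1,32,34,2); (1,33,1,1); (1,34,30,1); (1,34,32,3); (1,0,37,1);
  (1,0,40,1); (1,0,41,1); (1,0,42,1); (1,0,54,1); (1,1,39,1); (1,1,50,1); (1,1,52,1); (1,23,35,2);
  (1,23,35,3); (1,23,39,1); (1,23,48,1); (1,24,49,1); (1,24,52,2); (1,25,42,2); (1,29,37,4); (1,30,40,1);
  (1,30,41,1); (1,30,54,2); (1,31,39,4); (1,31,45,1); (1,34,44,1); (1,35,0,1); (1,36,31,3); (1,36,36,2);
  (1,37,32,3); (1,37,37,1); (1,39,38,3); (1,39,45,6); (1,39,53,3); (1,40,44,6); (1,41,38,1); (1,42,24,2);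
  (1,44,31,3); (1,45,29,1); (1,48,42,1); (1,51,31,1); (1,54,1,1); (1,0,88,1); (1,1,85,1); (1,1,91,1);
  (1,1,92,1); (1,24,77,1); (1,39,63,5)].

Lemma N_completion_ok : completion_ok N_rules N_completion.
Proof. by vm_compute. Qed.

(* coset_rep a sends 7 to a, so that tpoint a is the t_a of the paper. *)
Definition coset_reps : seq (seq nat) :=
  [:: [::]; [::0]; [::0;0]; [::0;0;0]; [::0;0;0;0]; [::0;0;0;0;0]; [::0;2;0;2];
      [::]; [::0;2;0;0;0]; [::0;2;0;0;0;0]; [::0;2;0;0;0;0;0]; [::0;0;0;0;2];
      [::0;2]; [::0;2;0]; [::0;2;0;0]].

Definition coset_rep (a : nat) : seq nat := nth [::] coset_reps a.

(* The stabiliser of 7 in N is generated by y and x^2 (y x^-1) x^-2, both of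
   which centralise t. *)
Definition stab_gen (i : nat) : seq nat :=
  if i == 0 then [:: 2] else [:: 0; 0; 2; 1; 1; 1].

Definition stab_factors : seq (seq (seq nat)) := [::
  [:: [::]; [::]; [::]];
  [:: [::]; [::]; [::]];
  [:: [::]; [::]; [::1]];
  [:: [::]; [::]; [::1;1]];
  [:: [::]; [::]; [::]];
  [:: [::0]; [::]; [::1;0;1;1]];
  [:: [::0]; [::0]; [::]];
  [:: [::]; [::0]; [::0]];
  [:: [::]; [::]; [::1;0;1;1]];
  [:: [::]; [::]; [::1;0;1]];
  [:: [::1]; [::]; [::0;1;0]];
  [:: [::1;1]; [::1;1]; [::]];
  [:: [::]; [::1]; [::]];
  [:: [::]; [::]; [::]];
  [:: [::]; [::]; [::1;1;0;1]]].

Definition stab_factor (a c : nat) : seq nat := nth [::] (nth [::] stab_factors a) c.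

Lemma coset_rep_letter :
  all (fun a => all (fun c =>
    reduce reduce_fuel N_rules (coset_rep a ++ [:: c]) ==
    reduce reduce_fuel N_rules
      (flatten (map stab_gen (stab_factor a c)) ++ coset_rep (act_letter c a)))
    (iota 0 3)) (iota 1 14).
Proof. by vm_compute. Qed.

Definition rel_yt2 : seq mletter := flatten (nseq 5 [:: Nlet 2; Tlet 2]).

Definition rel_xyx2t1 : seq mletter :=
  flatten (nseq 5 [:: Nlet 0; Nlet 2; Nlet 0; Nlet 0; Tlet 1]).

Definition rel_xt7 : seq mletter := flatten (nseq 8 [:: Nlet 0; Tlet 7]).

Definition rel_t7_t14 : seq mletter := [:: Tlet 7; Tlet 14; Tlet 7; Tlet 14].

Definition rel_t7_t1_t12 : seq mletter :=
  [:: Tlet 7; Tlet 1; Tlet 12; Tlet 7; Tlet 1;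
      Nlet 2; Nlet 0; Nlet 0; Nlet 2; Nlet 0; Nlet 0; Nlet 0; Nlet 0; Nlet 0].

Definition rel_s7_s1_s5 : seq mletter :=
  [:: Tlet 7; Tlet 14; Tlet 1; Tlet 8; Tlet 5; Tlet 12].

Definition t_relations : seq (seq mletter) :=
  [:: rel_yt2; rel_xyx2t1; rel_xt7; rel_t7_t14; rel_t7_t1_t12; rel_s7_s1_s5].

Lemma t_relations_ok : all mword_ok t_relations.
Proof. by []. Qed.

Definition cert_t7_t14 : seq cert_step := [::
  Conj [:: Nlet 0];
  Insert [:: Nlet 1; Nlet 1; Nlet 1; Nlet 2; Nlet 1; Nlet 1; Nlet 2; Nlet 1; Nlet 1; Nlet 1] 0 false;
  Conj [:: Nlet 2; Nlet 0; Nlet 0; Nlet 0; Nlet 2; Nlet 0; Nlet 0; Nlet 2; Nlet 0; Nlet 0];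
  Insert [:: Nlet 2; Nlet 1; Nlet 1; Nlet 2; Nlet 1; Nlet 1; Nlet 1; Nlet 1] 1 false;
  Conj [:: Tlet 9];
  Conj [:: Tlet 8];
  Conj [:: Tlet 2];
  Invert;
  Conj [:: Nlet 0; Nlet 0; Nlet 2; Nlet 0; Nlet 0; Nlet 0; Nlet 0; Nlet 2; Nlet 0; Nlet 0; Nlet 0];
  Insert [:: Nlet 2; Nlet 1; Nlet 2; Nlet 1] 0 false;
  Conj [:: Nlet 0; Nlet 0; Nlet 2; Nlet 0; Nlet 2];
  Insert [:: Nlet 2; Nlet 1; Nlet 1; Nlet 2; Nlet 1; Nlet 1; Nlet 1; Nlet 1] 1 false;
  Conj [::]].

Definition cert_t7_t1_t12 : seq cert_step := [::
  Conj [:: Nlet 0];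
  Insert [:: Nlet 1; Nlet 1; Nlet 1; Nlet 2; Nlet 1; Nlet 1; Nlet 2; Nlet 1; Nlet 1; Nlet 1] 0 false;
  Conj [:: Tlet 12];
  Conj [:: Tlet 1];
  Conj [:: Tlet 12];
  Conj [:: Tlet 1];
  Invert;
  Conj [:: Nlet 0; Nlet 0; Nlet 0; Nlet 2; Nlet 0; Nlet 0; Nlet 2; Nlet 0; Nlet 0];
  Conj [:: Tlet 1];
  Insert [:: Nlet 1; Nlet 1; Nlet 1; Nlet 1; Nlet 2; Nlet 1; Nlet 1; Nlet 1] 1 false;
  Conj [:: Tlet 8];
  Conj [:: Tlet 9];
  Conj [:: Tlet 1];
  Conj [:: Tlet 8];
  Conj [:: Tlet 7];
  Conj [:: Tlet 10];
  Conj [:: Nlet 0; Nlet 0; Nlet 0; Nlet 0; Nlet 2; Nlet 0; Nlet 0; Nlet 2; Nlet 0; Nlet 0; Nlet 0];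
  Conj [:: Tlet 1];
  Insert [:: Nlet 2; Nlet 1; Nlet 1; Nlet 1; Nlet 1; Nlet 2; Nlet 1; Nlet 1; Nlet 2; Nlet 1] 0 false;
  Conj [:: Tlet 5];
  Conj [:: Tlet 2];
  Conj [:: Tlet 5];
  Invert;
  Conj [:: Nlet 0; Nlet 0; Nlet 0; Nlet 2; Nlet 0; Nlet 0; Nlet 0; Nlet 0; Nlet 2; Nlet 0; Nlet 0; Nlet 2];
  Conj [:: Tlet 1];
  Conj [:: Tlet 2];
  Conj [:: Tlet 1];
  Conj [:: Tlet 7];
  Conj [:: Tlet 10];
  Conj [:: Tlet 2];
  Conj [:: Tlet 1];
  Conj [:: Tlet 8];
  Conj [:: Tlet 14];
  Insert [:: Nlet 2; Nlet 1; Nlet 1; Nlet 2; Nlet 1; Nlet 1; Nlet 1; Nlet 1] 1 false;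
  Conj [:: Tlet 9];
  Conj [:: Tlet 8];
  Conj [:: Tlet 1];
  Conj [:: Tlet 7];
  Conj [:: Tlet 10];
  Conj [:: Tlet 2];
  Conj [:: Tlet 1];
  Conj [:: Tlet 8];
  Conj [:: Nlet 2; Nlet 0; Nlet 0; Nlet 2; Nlet 0; Nlet 0; Nlet 2];
  Conj [:: Tlet 1];
  Conj [:: Tlet 2];
  Conj [:: Tlet 3];
  Insert [:: Nlet 1; Nlet 1; Nlet 2; Nlet 1; Nlet 1; Nlet 1; Nlet 2] 0 false;
  Conj [:: Nlet 0; Nlet 2; Nlet 0; Nlet 0; Nlet 0; Nlet 2; Nlet 0; Nlet 0];
  Conj [:: Tlet 1];
  Conj [:: Tlet 2];
  Conj [:: Tlet 1];
  Conj [:: Tlet 7];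
  Conj [:: Tlet 10];
  Conj [:: Tlet 1];
  Conj [:: Tlet 8];
  Conj [:: Tlet 9];
  Conj [:: Tlet 3];
  Insert [:: Nlet 2; Nlet 1; Nlet 1; Nlet 1; Nlet 2; Nlet 1; Nlet 1; Nlet 2] 1 false;
  Conj [:: Tlet 9];
  Invert;
  Conj [:: Nlet 0; Nlet 0; Nlet 0; Nlet 0; Nlet 2; Nlet 0; Nlet 0];
  Insert [:: Nlet 2; Nlet 1; Nlet 2; Nlet 1] 0 false;
  Conj [:: Nlet 0; Nlet 0; Nlet 2; Nlet 0; Nlet 2];
  Conj [:: Tlet 1];
  Insert [:: Nlet 2] 0 false;
  Conj [:: Tlet 3];
  Invert;
  Conj [:: Nlet 0; Nlet 0; Nlet 0; Nlet 2; Nlet 0; Nlet 0; Nlet 2; Nlet 0; Nlet 0; Nlet 0];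
  Conj [:: Tlet 1];
  Conj [:: Tlet 2];
  Conj [:: Tlet 1];
  Conj [:: Tlet 8];
  Conj [:: Tlet 9];
  Insert [:: Nlet 1; Nlet 1; Nlet 1; Nlet 1; Nlet 1; Nlet 2; Nlet 1] 1 false;
  Conj [:: Tlet 1];
  Conj [:: Nlet 0; Nlet 0; Nlet 0; Nlet 0; Nlet 0; Nlet 2; Nlet 0; Nlet 0];
  Insert [:: Nlet 2; Nlet 1; Nlet 2; Nlet 1] 0 false;
  Conj [:: Nlet 0; Nlet 0; Nlet 2; Nlet 0; Nlet 2];
  Insert [:: Nlet 2; Nlet 1; Nlet 1; Nlet 2; Nlet 1; Nlet 1; Nlet 1; Nlet 1] 1 false;
  Conj [::]].

Definition cert_s7_s1_s5 : seq cert_step := [::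
  Conj [:: Tlet 7];
  Invert;
  Conj [:: Nlet 2; Nlet 0];
  Insert [:: Nlet 2; Nlet 1; Nlet 2; Nlet 1] 0 false;
  Conj [:: Nlet 0; Nlet 0; Nlet 2; Nlet 0; Nlet 2];
  Insert [:: Nlet 2; Nlet 1; Nlet 1; Nlet 2; Nlet 1; Nlet 1; Nlet 1; Nlet 1] 1 false;
  Conj [:: Tlet 9];
  Conj [:: Tlet 8];
  Conj [:: Tlet 2];
  Invert;
  Conj [:: Nlet 0; Nlet 0; Nlet 2; Nlet 0; Nlet 0; Nlet 0; Nlet 0; Nlet 2; Nlet 0; Nlet 0; Nlet 0];
  Conj [:: Tlet 1];
  Conj [:: Tlet 2];
  Conj [:: Tlet 6];
  Insert [:: Nlet 1; Nlet 1; Nlet 2; Nlet 1; Nlet 1; Nlet 2; Nlet 1; Nlet 1; Nlet 1; Nlet 2] 4 false;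
  Conj [::];
  Insert [:: Nlet 1; Nlet 2; Nlet 1; Nlet 1; Nlet 1; Nlet 1] 0 false;
  Conj [:: Tlet 14];
  Conj [:: Tlet 1];
  Conj [:: Tlet 14];
  Conj [:: Tlet 1];
  Invert;
  Conj [:: Nlet 2; Nlet 0; Nlet 0; Nlet 2; Nlet 0; Nlet 0; Nlet 2; Nlet 0; Nlet 0; Nlet 2];
  Conj [:: Tlet 1];
  Conj [:: Tlet 2];
  Insert [:: Nlet 1] 2 true;
  Conj [:: Tlet 7];
  Conj [:: Tlet 6];
  Conj [:: Tlet 5];
  Conj [:: Tlet 4];
  Invert;
  Conj [:: Nlet 0; Nlet 0; Nlet 0; Nlet 0];
  Conj [:: Tlet 1];
  Insert [:: Nlet 1; Nlet 2; Nlet 1; Nlet 1; Nlet 2; Nlet 1; Nlet 1; Nlet 1; Nlet 1] 1 false;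
  Conj [:: Tlet 10];
  Conj [:: Tlet 9];
  Conj [:: Tlet 3];
  Conj [:: Tlet 5];
  Conj [:: Nlet 2; Nlet 0; Nlet 0; Nlet 0];
  Conj [:: Tlet 1];
  Conj [:: Tlet 2];
  Conj [:: Tlet 4];
  Insert [:: Nlet 2; Nlet 1; Nlet 1; Nlet 2; Nlet 1; Nlet 1; Nlet 1; Nlet 1; Nlet 2; Nlet 1; Nlet 1] 4 false;
  Conj [:: Tlet 13];
  Conj [:: Tlet 5];
  Conj [:: Tlet 7];
  Conj [:: Tlet 10];
  Invert;
  Conj [:: Nlet 2; Nlet 0; Nlet 0; Nlet 0; Nlet 2];
  Conj [:: Tlet 1];
  Insert [:: Nlet 1; Nlet 2; Nlet 1; Nlet 1; Nlet 2; Nlet 1; Nlet 1; Nlet 1; Nlet 1; Nlet 2; Nlet 1] 4 false;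
  Conj [:: Tlet 12];
  Invert;
  Conj [:: Nlet 2; Nlet 0; Nlet 0; Nlet 0; Nlet 2; Nlet 0; Nlet 0; Nlet 2; Nlet 0; Nlet 0];
  Insert [:: Nlet 2; Nlet 1; Nlet 2; Nlet 1] 0 false;
  Conj [:: Nlet 0; Nlet 0; Nlet 2; Nlet 0; Nlet 2];
  Conj [:: Tlet 1];
  Insert [:: Nlet 1; Nlet 2; Nlet 1; Nlet 1; Nlet 1; Nlet 2; Nlet 1; Nlet 1; Nlet 1; Nlet 1; Nlet 1] 1 false;
  Conj [:: Tlet 11];
  Conj [:: Tlet 9];
  Conj [:: Tlet 4];
  Conj [:: Tlet 8];
  Conj [:: Tlet 3];
  Conj [:: Tlet 6];
  Conj [:: Nlet 2; Nlet 0; Nlet 0; Nlet 2];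
  Conj [:: Tlet 1];
  Conj [:: Tlet 2];
  Conj [:: Tlet 4];
  Conj [:: Tlet 1];
  Conj [:: Tlet 6];
  Insert [:: Nlet 2; Nlet 1; Nlet 1; Nlet 2; Nlet 1; Nlet 1] 4 false;
  Conj [:: Tlet 10];
  Conj [:: Tlet 11];
  Conj [:: Tlet 9];
  Conj [:: Tlet 7];
  Conj [:: Tlet 13];
  Conj [:: Tlet 1];
  Conj [:: Nlet 0; Nlet 0; Nlet 0; Nlet 0; Nlet 2; Nlet 0; Nlet 0; Nlet 2; Nlet 0; Nlet 0];
  Insert [:: Nlet 1] 2 true;
  Conj [:: Tlet 7];
  Conj [:: Tlet 6];
  Conj [:: Tlet 5];
  Conj [:: Tlet 4];
  Invert;
  Conj [:: Nlet 0; Nlet 0; Nlet 0; Nlet 0];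
  Insert [:: Nlet 2; Nlet 1; Nlet 1; Nlet 2; Nlet 1; Nlet 1; Nlet 1; Nlet 1] 1 false;
  Conj [:: Tlet 9];
  Conj [:: Tlet 8];
  Conj [:: Nlet 2; Nlet 0; Nlet 0; Nlet 2; Nlet 0; Nlet 0; Nlet 0; Nlet 0; Nlet 2];
  Insert [:: Nlet 1] 4 false;
  Conj [::]].

Lemma cert_t7_t14_ok : cert_ok N_rules (take 3 t_relations) rel_t7_t14 cert_t7_t14.
Proof. by vm_compute. Qed.

Lemma cert_t7_t1_t12_ok :
  cert_ok N_rules (take 4 t_relations) rel_t7_t1_t12 cert_t7_t1_t12.
Proof. by vm_compute. Qed.

Lemma cert_s7_s1_s5_ok :
  cert_ok N_rules (take 5 t_relations) rel_s7_s1_s5 cert_s7_s1_s5.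
Proof. by vm_compute. Qed.

(** * Consequences of the defining relations *)

Section Presentation.
Variable G : group.
Variables x y t : G.
Hypothesis relsG : GG_relations x y t.
Local Notation "a * b" := (gmul a b).
Local Notation e := (gone G).
Local Notation eval_nword := (eval_nword x y).
Local Notation tpoint := (tpoint x y t coset_rep).
Local Notation eval_mword := (eval_mword x y t coset_rep).

Lemma y_invol : y * y = e.
Proof. by case: relsG => _ [+ _]; rewrite /= gmulg1. Qed.

Lemma t_invol : t * t = e.
Proof. by case: relsG => _ [_ [_ [_ [+ _]]]]; rewrite /= gmulg1. Qed.

Lemma N_relators_trivial u : u \in N_relators -> eval_nword u = e.
Proof.
case: relsG => x7 [_ [xy3 [cxy4 _]]].
have ginv_y : ginv y = y by apply/ginv_unique/y_invol.
rewrite !inE => /or4P [|||/or3P []] /eqP ->.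
- by rewrite /= gmulg1 gmulgV.
- by rewrite /= gmulg1 gmulVg.
- by rewrite /= gmulg1 y_invol.
- exact: x7.
- by rewrite eval_nword_pow /= gmulg1.
- by rewrite eval_nword_pow -cxy4 /gcomm ginv_y /= gmulg1 -!gmulA.
Qed.

Lemma N_rules_sound : sound_rules x y N_rules.
Proof. exact: (completion_sound N_relators_trivial N_completion_ok). Qed.

Lemma t_commutes_stab h :
  t * eval_nword (flatten (map stab_gen h)) = eval_nword (flatten (map stab_gen h)) * t.
Proof.
case: relsG => _ [_ [_ [_ [_ [ct2 [cty _]]]]]].
elim: h => [|i h IH] /=; first by rewrite gmulg1 gmul1g.
rewrite eval_nword_cat; apply: commuteM IH; rewrite /stab_gen; case: (i == 0).
  by rewrite /= gmulg1; apply: gcomm1_commute.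
have := commute_gconjV (gcomm1_commute ct2).
by rewrite /= gmulg1 ginvM -!gmulA.
Qed.

Lemma tpoint_conj_letter c a : is_point a ->
  gconj (tpoint a) (eval_letter x y c) = tpoint (act_letter c a).
Proof.
wlog Hc : c / c < 3.
  move=> IH; case: (ltnP c 3) => [|Hc]; first exact: IH.
  have [-> ->] : eval_letter x y c = eval_letter x y 2 /\
                 act_letter c a = act_letter 2 a by case: c Hc => [|[|[|c]]].
  exact: IH.
rewrite is_pointE => Ha.
have Hc' : c \in iota 0 3 by rewrite mem_iota.
have /eqP E := allP (allP coset_rep_letter a Ha) c Hc'.
have -> : eval_letter x y c = eval_nword [:: c] by rewrite /= gmulg1.
have Hred w := reduce_sound reduce_fuel w N_rules_sound.
rewrite /tpoint -gconjM -eval_nword_cat -Hred E Hred eval_nword_cat gconjM.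
by rewrite (gconj_id (t_commutes_stab _)).
Qed.

Lemma tpoint7 : tpoint 7 = t.
Proof. exact: gconj1. Qed.

Lemma tpoint_conj p w : is_point p -> gconj (tpoint p) (evalw x y w) = tpoint (actw p w).
Proof.
elim: w p => [|b w IH] p Hp /=; first exact: gconj1.
have -> : (if b then act_y p else act_x p) = act_letter (if b then 2 else 0) p.
  by case: b.
rewrite gconjM -IH; last exact: act_letter_point.
by case: b; rewrite -tpoint_conj_letter.
Qed.

Lemma rel_yt2_trivial : eval_mword rel_yt2 = e.
Proof.
case: relsG => _ [_ [_ [_ [_ [_ [_ [yt5 _]]]]]]].
by rewrite eval_mword_pow -yt5 /= /tpoint /= !gmulg1.
Qed.

Lemma rel_xyx2t1_trivial : eval_mword rel_xyx2t1 = e.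
Proof.
case: relsG => _ [_ [_ [_ [_ [_ [_ [_ [xt5 _]]]]]]]].
by rewrite eval_mword_pow -xt5 /= /tpoint /= !gmulg1 -!gmulA.
Qed.

Lemma rel_xt7_trivial : eval_mword rel_xt7 = e.
Proof.
case: relsG => _ [_ [_ [_ [_ [_ [_ [_ [_ xt8]]]]]]]].
by rewrite eval_mword_pow -xt8 /= gmulg1 tpoint7.
Qed.

Lemma trivial_by_cert n w cs :
  (forall r, r < n -> eval_mword (nth [::] t_relations r) = e) ->
  mword_ok w -> cert_ok N_rules (take n t_relations) w cs -> eval_mword w = e.
Proof.
move=> Hrels; apply: (cert_sound N_rules_sound t_invol y_invol tpoint_conj_letter).
move=> r; case: (ltnP r n) => Hr; last first.
  by rewrite nth_default // size_take_min (leq_trans (geq_minl _ _)).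
case: (ltnP r (size t_relations)) => Hs; last first.
  by rewrite nth_default // size_take_min (leq_trans (geq_minr _ _)).
by rewrite nth_take //; split; [apply: (all_nthP [::] t_relations_ok) | apply: Hrels].
Qed.

Lemma rel_t7_t14_trivial : eval_mword rel_t7_t14 = e.
Proof.
apply: (trivial_by_cert _ _ cert_t7_t14_ok) => // -[|[|[|]]] // _.
- exact: rel_yt2_trivial.
- exact: rel_xyx2t1_trivial.
- exact: rel_xt7_trivial.
Qed.

Lemma rel_t7_t1_t12_trivial : eval_mword rel_t7_t1_t12 = e.
Proof.
apply: (trivial_by_cert _ _ cert_t7_t1_t12_ok) => // -[|[|[|[|]]]] // _.
- exact: rel_yt2_trivial.
- exact: rel_xyx2t1_trivial.
- exact: rel_xt7_trivial.
- exact: rel_t7_t14_trivial.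
Qed.

Lemma rel_s7_s1_s5_trivial : eval_mword rel_s7_s1_s5 = e.
Proof.
apply: (trivial_by_cert _ _ cert_s7_s1_s5_ok) => // -[|[|[|[|[|]]]]] // _.
- exact: rel_yt2_trivial.
- exact: rel_xyx2t1_trivial.
- exact: rel_xt7_trivial.
- exact: rel_t7_t14_trivial.
- exact: rel_t7_t1_t12_trivial.
Qed.

End Presentation.

(** * The action of N on the Fano plane *)

Definition partner (p : nat) : nat := if p <= 7 then p + 7 else p - 7.

Definition block (p : nat) : nat := if p <= 7 then p else p - 7.

Lemma actw_point p w : is_point p -> is_point (actw p w).
Proof.
elim: w p => [|b w IH] p Hp //=; apply: IH.
by case: b; [apply: (act_letter_point 2) | apply: (act_letter_point 0)].
Qed.

Lemma partner_actw p w : is_point p -> actw (partner p) w = partner (actw p w).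
Proof.
elim: w p => [|b w IH] p Hp //=.
have -> : (if b then act_y (partner p) else act_x (partner p)) =
          partner (if b then act_y p else act_x p).
  by case/andP: Hp; case: b; do 15?[case: p => [|p] //].
apply: IH.
by case: b; [apply: (act_letter_point 2) | apply: (act_letter_point 0)].
Qed.

Fixpoint words_upto (n : nat) : seq (seq bool) :=
  if n is n'.+1 then [::] :: [seq b :: w | b <- [:: false; true], w <- words_upto n']
  else [:: [::]].

Lemma points_transitive :
  all (fun q => has (fun w => actw 7 w == q) (words_upto 7)) (iota 1 14).
Proof. by vm_compute. Qed.

Lemma lines_transitive :
  all (fun i => all (fun j => all (fun k => ~~ collinear i j k ||
    has (fun w => [seq block (actw p w) | p <- [:: 7; 1; 5]] == [:: i; j; k])
        (words_upto 9))
  (iota 0 8)) (iota 0 8)) (iota 0 8).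
Proof. by vm_compute. Qed.

Lemma point_image q : is_point q -> exists w, actw 7 w = q.
Proof.
rewrite is_pointE => /(allP points_transitive) /hasP [w _ /eqP <-].
by exists w.
Qed.

Lemma collinear_image i j k : collinear i j k ->
  exists w, [/\ block (actw 7 w) = i, block (actw 1 w) = j & block (actw 5 w) = k].
Proof.
move=> Hijk.
have Hpts : all (fun L => all (fun a => a < 8) L) fano_lines by [].
have [Hi Hj Hk] : [/\ i < 8, j < 8 & k < 8].
  case/and4P: Hijk => _ _ _ /hasP [L /(allP Hpts) /allP HL /and3P [Li Lj Lk]].
  by split; apply: HL.
have := allP (allP (allP lines_transitive i _) j _) k; rewrite !mem_iota.
by move=> /(_ Hi Hj Hk); rewrite Hijk => /hasP [w _ /eqP [<- <- <-]]; exists w.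
Qed.

Section Lines.
Variable G : group.
Variables x y t : G.
Hypothesis relsG : GG_relations x y t.
Local Notation "a * b" := (gmul a b).
Local Notation e := (gone G).
Local Notation tpoint := (tpoint x y t coset_rep).

Definition spair (i : nat) : G := tpoint i * tpoint (i + 7).

Lemma gconj_tpoint_pair p w : is_point p ->
  gconj (tpoint p * tpoint (partner p)) (evalw x y w) =
  tpoint (actw p w) * tpoint (partner (actw p w)).
Proof.
move=> Hp; have Hq : is_point (partner p) by case/andP: Hp; do 15?[case: p => [|p] //].
by rewrite gconjMl !tpoint_conj // partner_actw.
Qed.

Lemma tpoint_partner_commute p : is_point p ->
  tpoint p * tpoint (partner p) = tpoint (partner p) * tpoint p.
Proof.
move=> /point_image [w <-].
have E : tpoint 7 * tpoint 14 = tpoint 14 * tpoint 7.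
  have := rel_t7_t14_trivial relsG; rewrite /= gmulg1 gmulA => E.
  by apply: (invol_commute _ _ E); apply: tpoint_invol; exact: t_invol relsG.
have := gconj_tpoint_pair w (isT : is_point 7).
by rewrite -[partner 7]/14 E gconjMl !tpoint_conj // -[14]/(partner 7) partner_actw.
Qed.

Lemma tpoint_pair_block p : is_point p ->
  tpoint p * tpoint (partner p) = spair (block p).
Proof.
move=> Hp; rewrite /spair /block; case: leqP => Hp7; first by rewrite /partner Hp7.
by rewrite tpoint_partner_commute // /partner leqNgt Hp7 /= subnK // ltnW.
Qed.

Lemma spair_s7_s1_s5 : spair 7 * spair 1 * spair 5 = e.
Proof.
have := rel_s7_s1_s5_trivial relsG; rewrite /= gmulg1.
by rewrite (gmulA (tpoint 7)) (gmulA (tpoint 1)) (gmulA (tpoint 7 * _)).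
Qed.

Lemma spair_line i j k : collinear i j k -> spair i * spair j * spair k = e.
Proof.
case/collinear_image => w [<- <- <-].
rewrite -!tpoint_pair_block ?actw_point // -!gconj_tpoint_pair // -!gconjMl.
by rewrite spair_s7_s1_s5 gconj_e.
Qed.

End Lines.

Theorem lemma3p4 (G : group) (x y t : G) :
  GG_relations x y t ->
  forall i j k : nat, collinear i j k ->
  forall wi wi' wj wj' wk wk' : seq bool,
    actw 7 wi = i -> actw 7 wi' = i + 7 ->
    actw 7 wj = j -> actw 7 wj' = j + 7 ->
    actw 7 wk = k -> actw 7 wk' = k + 7 ->
    let T w := gconj t (evalw x y w) in
    gmul (gmul (gmul (T wi) (T wi')) (gmul (T wj) (T wj')))
         (gmul (T wk) (T wk')) = gone G.
Proof.
move=> relsG i j k Hijk wi wi' wj wj' wk wk' Ei Ei' Ej Ej' Ek Ek' T.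
have ET w : T w = tpoint x y t coset_rep (actw 7 w).
  by rewrite /T -{1}(@tpoint7 _ x y t) (tpoint_conj relsG).
rewrite !ET Ei Ei' Ej Ej' Ek Ek'.
exact: (spair_line relsG Hijk).
Qed.
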